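(* In $TTR$, if $\Gamma,x:A\vdash_{TTR}(x)u_1\dots u_n:B$, then either $n=0$ and there is a sequence of variables $\mathbf v_0$ not free in $A$ and $\Gamma$ such that $\forall\mathbf v_0A\subseteq B$; or $n\ge1$ and there are types $C_i,B_i$ ($1\le i\le n$) and sequences of variables $\mathbf v_i$ ($0\le i\le n$) not free in $A$ and $\Gamma$, such that $\forall\mathbf v_0A\subseteq C_1\to B_1$, $\forall\mathbf v_iB_i\subseteq C_{i+1}\to B_{i+1}$ for $1\le i\le n-1$, $\forall\mathbf v_nB_n\subseteq B$, and $\Gamma,x:A\vdash_{TTR}u_i:C_i$ for $1\le i\le n$.
   Context: $TTR$ is the type system whose types are built over a second-order language (first-order variables, function symbols, $n$-ary predicate variables and symbols) with a fixed system $\mathbf E$ of equations: atomic $\perp$ and $X(t_1,\dots,t_n)$; $A\to B$, $\forall xA$, $\forall XA$, and $\mu Cx_1\dots x_nA\langle t_1,\dots,t_n\rangle$ for $C$ an $n$-ary predicate symbol occurring and positive in $A$. Subtyping $\subseteq$ is generated by: reflexivity; $A\subseteq A',B\subseteq B'\Rightarrow A'\to B\subseteq A\to B'$; $A[G/v]\subseteq B\Rightarrow\forall vA\subseteq B$ ($G$ a term or formula as appropriate); $A\subseteq B\Rightarrow A\subseteq\forall vB$ ($v$ not free in $A$); $A\subseteq B[v/y]\Rightarrow A\subseteq B[w/y]$ for $v=w$ an instance of an equation of $\mathbf E$; transitivity; $D[\mu C\bar xD\langle\bar z\rangle/C(\bar z)][\bar t/\bar x]\subseteq\mu C\bar xD\langle\bar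 t\rangle$ and its converse; $D[E/C(\bar x)]\subseteq E\Rightarrow\mu C\bar xD\langle\bar t\rangle\subseteq E[\bar t/\bar x]$. Typing $\vdash_{TTR}$: variable axiom $\Gamma,x:A\vdash x:A$; $\to$-intro/elim; $\forall$-intro (variable not in context) and elimination (instantiating by terms / formulas) for first- and second-order variables; equational rule; subsumption along $\subseteq$; rule (Y): from $\Gamma\vdash t:\forall\bar x[C(\bar x)\to E]\to\forall\bar x[D\to E]$ infer $\Gamma\vdash(Y)t:\forall\bar x[\mu C\bar xD\langle\bar x\rangle\to E]$ ($C$ not free in $E$ nor in $\Gamma$, $Y$ Turing's fixed point combinator). $(x)u_1\dots u_n$ is iterated application; $\forall\mathbf v$ a sequence of quantifiers. *)

From Stdlib Require Import List Arith Bool.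
Import ListNotations.

(* First-order terms.  A function symbol is identified by its name and *)
(* its arity (= number of arguments), so every raw term is well formed. *)
Inductive fterm : Type :=
| FV (x : nat)
| FF (f : nat) (ts : list fterm).

Fixpoint tsubst (s : nat -> fterm) (t : fterm) : fterm :=
  match t with
  | FV x => s x
  | FF f ts => FF f (map (tsubst s) ts)
  end.

Fixpoint fv_t (t : fterm) : list nat :=
  match t with
  | FV x => [x]
  | FF _ ts => flat_map fv_t ts
  end.

(* Formulas (types).  Second-order (predicate) variables and predicate *)
(* symbols are identified by (name, arity); in an atom the arity is the *)
(* number of arguments.                                                *)
Inductive pk : Type := KVar | KSym.

Definition pk_eqb (a b : pk) : bool :=
  match a, b with KVar, KVar | KSym, KSym => true | _, _ => false end.

Inductive formula : Type :=
| Bot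
| Atom (k : pk) (P : nat) (ts : list fterm)
| Arr (A B : formula)
| All1 (x : nat) (A : formula)
| All2 (X n : nat) (A : formula)
| Mu (C : nat) (xs : list nat) (D : formula) (ts : list fterm).
    (* mu C x1..xn D <t1..tn>; binds C (arity n) and x1..xn in D *)

Definition pname : Type := (pk * nat * nat)%type.

Definition pn_eqb (p q : pname) : bool :=
  match p, q with
  | (k, P, n), (k', P', n') => pk_eqb k k' && (P =? P') && (n =? n')
  end.

Definition mem (x : nat) (l : list nat) : bool := existsb (Nat.eqb x) l.

Fixpoint fv1 (A : formula) : list nat :=
  match A with
  | Bot => []
  | Atom _ _ ts => flat_map fv_t ts
  | Arr A B => fv1 A ++ fv1 B
  | All1 y A => filter (fun z => negb (z =? y)) (fv1 A)
  | All2 _ _ A => fv1 A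
  | Mu _ xs D ts => filter (fun z => negb (mem z xs)) (fv1 D) ++ flat_map fv_t ts
  end.

Fixpoint fvp (A : formula) : list pname :=
  match A with
  | Bot => []
  | Atom k P ts => [(k, P, length ts)]
  | Arr A B => fvp A ++ fvp B
  | All1 _ A => fvp A
  | All2 Y m A => filter (fun p => negb (pn_eqb p (KVar, Y, m))) (fvp A)
  | Mu C xs D _ => filter (fun p => negb (pn_eqb p (KSym, C, length xs))) (fvp D)
  end.

Definition upd (s : nat -> fterm) (y : nat) (u : fterm) : nat -> fterm :=
  fun z => if z =? y then u else s z.

Fixpoint upds (s : nat -> fterm) (xs : list nat) (us : list fterm) : nat -> fterm :=
  match xs, us with
  | x :: xs', u :: us' => upd (upds s xs' us') x u
  | _, _ => s
  end.

Definition fresh (l : list nat) : nat := S (list_max l).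

Fixpoint fsub (s : nat -> fterm) (A : formula) : formula :=
  match A with
  | Bot => Bot
  | Atom k P ts => Atom k P (map (tsubst s) ts)
  | Arr A B => Arr (fsub s A) (fsub s B)
  | All1 y A =>
      let av := flat_map (fun z => fv_t (s z)) (filter (fun z => negb (z =? y)) (fv1 A)) in
      let y' := if mem y av then fresh (av ++ fv1 A) else y in
      All1 y' (fsub (upd s y (FV y')) A)
  | All2 X n A => All2 X n (fsub s A)
  | Mu C xs D ts =>
      let av := flat_map (fun z => fv_t (s z)) (filter (fun z => negb (mem z xs)) (fv1 D)) in
      let xs' := if existsb (fun x => mem x av) xs
                 then seq (fresh (av ++ fv1 D ++ xs)) (length xs) else xs in
      Mu C xs' (fsub (upds s xs (map FV xs')) D) (map (tsubst s) ts)
  end.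

(* An abstraction (x1..xn, F): a formula with n distinguished first-order
   variables, to be substituted for an n-ary predicate variable/symbol. *)
Definition abs : Type := (list nat * formula)%type.

Definition apply_abs (G : abs) (ts : list fterm) : formula :=
  fsub (upds FV (fst G) ts) (snd G).

Definition fv1_abs (G : abs) : list nat :=
  filter (fun z => negb (mem z (fst G))) (fv1 (snd G)).

Definition pnames (l : list pname) : list nat := map (fun p => snd (fst p)) l.

Definition ren_abs (k : pk) (Y' m : nat) : abs :=
  (seq 0 m, Atom k Y' (map FV (seq 0 m))).

Fixpoint psub (s1 : nat -> fterm) (s2 : pname -> option abs) (A : formula) : formula :=
  match A with
  | Bot => Bot
  | Atom k P ts =>
      let ts' := map (tsubst s1) ts in
      match s2 (k, P, length ts) with
      | Some G => apply_abs G ts'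
      | None => Atom k P ts'
      end
  | Arr A B => Arr (psub s1 s2 A) (psub s1 s2 B)
  | All1 y A =>
      let av := flat_map (fun z => fv_t (s1 z)) (filter (fun z => negb (z =? y)) (fv1 A))
             ++ flat_map (fun p => match s2 p with Some G => fv1_abs G | None => [] end)
                         (fvp A) in
      let y' := if mem y av then fresh (av ++ fv1 A) else y in
      All1 y' (psub (upd s1 y (FV y')) s2 A)
  | All2 Y m A =>
      let avp := flat_map (fun p => match s2 p with Some G => fvp (snd G) | None => [p] end)
                   (filter (fun p => negb (pn_eqb p (KVar, Y, m))) (fvp A)) in
      let Y' := if existsb (pn_eqb (KVar, Y, m)) avp
                then fresh (pnames avp ++ pnames (fvp A)) else Y in
      let s2' := fun p => if pn_eqb p (KVar, Y, m)
                          then (if Y' =? Y then None else Some (ren_abs KVar Y' m))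
                          else s2 p in
      All2 Y' m (psub s1 s2' A)
  | Mu C xs D ts =>
      let n := length xs in
      let fD := filter (fun p => negb (pn_eqb p (KSym, C, n))) (fvp D) in
      let av := flat_map (fun z => fv_t (s1 z)) (filter (fun z => negb (mem z xs)) (fv1 D))
             ++ flat_map (fun p => match s2 p with Some G => fv1_abs G | None => [] end) fD in
      let xs' := if existsb (fun x => mem x av) xs
                 then seq (fresh (av ++ fv1 D ++ xs)) n else xs in
      let avp := flat_map (fun p => match s2 p with Some G => fvp (snd G) | None => [p] end) fD in
      let C' := if existsb (pn_eqb (KSym, C, n)) avp
                then fresh (pnames avp ++ pnames (fvp D)) else C in
      let s2' := fun p => if pn_eqb p (KSym, C, n)
                          then (if C' =? C then None else Some (ren_abs KSym C' n))
                          else s2 p in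
      Mu C' xs' (psub (upds s1 xs (map FV xs')) s2' D) (map (tsubst s1) ts)
  end.

Definition subst1 (x : nat) (t : fterm) (A : formula) : formula := fsub (upd FV x t) A.
Definition simsub (xs : list nat) (ts : list fterm) (A : formula) : formula :=
  fsub (upds FV xs ts) A.
Definition subst2 (k : pk) (P n : nat) (G : abs) (A : formula) : formula :=
  psub FV (fun p => if pn_eqb p (k, P, n) then Some G else None) A.

(* pos_only neg c A : every free occurrence of the symbol c in A is positive
   (when neg = false) ; has no free occurrence at all in a position of the
   wrong polarity. *)
Fixpoint pos_only (neg : bool) (c : nat * nat) (A : formula) : bool :=
  match A with
  | Bot => true
  | Atom KVar _ _ => true
  | Atom KSym C ts => if (C =? fst c) && (length ts =? snd c) then negb neg else true
  | Arr A B => pos_only (negb neg) c A && pos_only neg c B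
  | All1 _ A => pos_only neg c A
  | All2 _ _ A => pos_only neg c A
  | Mu C xs D _ =>
      if (C =? fst c) && (length xs =? snd c) then true else pos_only neg c D
  end.

Definition positive (c : nat * nat) (A : formula) : bool := pos_only false c A.

Definition occurs (c : nat * nat) (A : formula) : Prop :=
  In (KSym, fst c, snd c) (fvp A).

Fixpoint wf (A : formula) : Prop :=
  match A with
  | Bot => True
  | Atom _ _ _ => True
  | Arr A B => wf A /\ wf B
  | All1 _ A => wf A
  | All2 _ _ A => wf A
  | Mu C xs D ts =>
      wf D /\ occurs (C, length xs) D /\ positive (C, length xs) D = true
      /\ NoDup xs /\ length ts = length xs
  end.

Definition wf_abs (n : nat) (G : abs) : Prop :=
  length (fst G) = n /\ NoDup (fst G) /\ wf (snd G).

Inductive qvar : Type :=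
| Q1 (x : nat)
| Q2 (X n : nat).

Definition freeq (q : qvar) (A : formula) : Prop :=
  match q with
  | Q1 x => In x (fv1 A)
  | Q2 X n => In (KVar, X, n) (fvp A)
  end.

Definition quant1 (q : qvar) (A : formula) : formula :=
  match q with Q1 x => All1 x A | Q2 X n => All2 X n A end.

Definition quant (vs : list qvar) (A : formula) : formula := fold_right quant1 A vs.

Definition all1s (xs : list nat) (A : formula) : formula := fold_right All1 A xs.

(* The fixed system of equations E: a list of pairs (l, r) standing for l = r.
   v = w is an instance of an equation of E. *)
Definition eq_instance (E : list (fterm * fterm)) (v w : fterm) : Prop :=
  exists (s : nat -> fterm) (l r : fterm), In (l, r) E /\ v = tsubst s l /\ w = tsubst s r.

Definition mu_unfold (C : nat) (xs : list nat) (D : formula) (ts : list fterm) : formula :=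
  simsub xs ts (subst2 KSym C (length xs) (xs, Mu C xs D (map FV xs)) D).

Inductive subty (E : list (fterm * fterm)) : formula -> formula -> Prop :=
| st_refl A : wf A -> subty E A A
| st_arr A A' B B' : subty E A A' -> subty E B B' -> subty E (Arr A' B) (Arr A B')
| st_all1_l x A t B :
    wf (All1 x A) -> subty E (subst1 x t A) B -> subty E (All1 x A) B
| st_all2_l X n A G B :
    wf (All2 X n A) -> wf_abs n G -> subty E (subst2 KVar X n G A) B ->
    subty E (All2 X n A) B
| st_all_r q A B :
    ~ freeq q A -> subty E A B -> subty E A (quant1 q B)
| st_eq A B y v w :
    eq_instance E v w -> wf (subst1 y w B) ->
    subty E A (subst1 y v B) -> subty E A (subst1 y w B)
| st_trans A B C : subty E A B -> subty E B C -> subty E A C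
| st_fold C xs D ts :
    wf (Mu C xs D ts) -> wf (mu_unfold C xs D ts) ->
    subty E (mu_unfold C xs D ts) (Mu C xs D ts)
| st_unfold C xs D ts :
    wf (Mu C xs D ts) -> wf (mu_unfold C xs D ts) ->
    subty E (Mu C xs D ts) (mu_unfold C xs D ts)
| st_ind C xs D ts F :
    wf (Mu C xs D ts) -> wf F -> wf (simsub xs ts F) ->
    subty E (subst2 KSym C (length xs) (xs, F) D) F ->
    subty E (Mu C xs D ts) (simsub xs ts F).

Inductive term : Type :=
| Var (x : nat)
| App (t u : term)
| Lam (x : nat) (t : term).

Definition apps (t : term) (us : list term) : term := fold_left App us t.

(* Turing's fixed point combinator  Y = (A)A,  A = \a\f (f)(a)a f *)
Definition TuringA : term :=
  Lam 0 (Lam 1 (App (Var 1) (App (App (Var 0) (Var 0)) (Var 1)))).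
Definition Ycomb : term := App TuringA TuringA.

Definition context : Type := list (nat * formula).

Fixpoint lookup (G : context) (x : nat) : option formula :=
  match G with
  | [] => None
  | (y, A) :: G' => if x =? y then Some A else lookup G' x
  end.

Definition free_ctx (q : qvar) (G : context) : Prop :=
  exists p, In p G /\ freeq q (snd p).

Definition psym_free_ctx (c : pname) (G : context) : Prop :=
  exists p, In p G /\ In c (fvp (snd p)).

Inductive typ (E : list (fterm * fterm)) : context -> term -> formula -> Prop :=
| ty_var G x A : lookup G x = Some A -> wf A -> typ E G (Var x) A
| ty_lam G x t A B : wf A -> typ E ((x, A) :: G) t B -> typ E G (Lam x t) (Arr A B)
| ty_app G t u A B : typ E G t (Arr A B) -> typ E G u A -> typ E G (App t u) B
| ty_all_i G t q A : ~ free_ctx q G -> typ E G t A -> typ E G t (quant1 q A)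
| ty_all1_e G t x A u :
    wf (subst1 x u A) -> typ E G t (All1 x A) -> typ E G t (subst1 x u A)
| ty_all2_e G t X n A F :
    wf_abs n F -> wf (subst2 KVar X n F A) ->
    typ E G t (All2 X n A) -> typ E G t (subst2 KVar X n F A)
| ty_eq G t A y v w :
    eq_instance E v w -> wf (subst1 y w A) ->
    typ E G t (subst1 y v A) -> typ E G t (subst1 y w A)
| ty_sub G t A B : subty E A B -> typ E G t A -> typ E G t B
| ty_Y G t C xs D F :
    ~ In (KSym, C, length xs) (fvp F) -> ~ psym_free_ctx (KSym, C, length xs) G ->
    wf (all1s xs (Arr (Mu C xs D (map FV xs)) F)) ->
    typ E G t (Arr (all1s xs (Arr (Atom KSym C (map FV xs)) F)) (all1s xs (Arr D F))) ->
    typ E G (App Ycomb t) (all1s xs (Arr (Mu C xs D (map FV xs)) F)).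

Definition not_free_seq (vs : list qvar) (A : formula) (G : context) : Prop :=
  forall q, In q vs -> ~ freeq q A /\ ~ free_ctx q G.

(* Only the variable axiom, application and the type-changing rules
   (forall-introduction and elimination, the equational rule, subsumption) can
   type an application (x)u1...un; lambda-abstraction and rule (Y) type terms of
   another shape.  Eliminations and the equational rule are instances of
   subtyping rules, so they lengthen the last subtyping step of the chain; a
   forall v introduction, with v free neither in A nor in Γ, joins the last
   quantifier prefix, because forall v is monotone for subtyping. *)

From Stdlib Require Import List Arith Bool Lia.
Import ListNotations.

Lemma mem_In x l : mem x l = true <-> In x l.
Proof.
  unfold mem; rewrite existsb_exists; split.
  - now intros [z [Hz Hzx]]; apply Nat.eqb_eq in Hzx; subst.
  - now intros Hx; exists x; rewrite Nat.eqb_refl.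
Qed.

Lemma mem_filter_neq y l : mem y (filter (fun z => negb (z =? y)) l) = false.
Proof.
  apply not_true_is_false; intros Hy.
  apply mem_In, filter_In in Hy as [_ Hy].
  now rewrite Nat.eqb_refl in Hy.
Qed.

Lemma existsb_mem_filter_notin xs l :
  existsb (fun x => mem x (filter (fun z => negb (mem z xs)) l)) xs = false.
Proof.
  apply not_true_is_false; intros Hx.
  apply existsb_exists in Hx as [z [Hz Hzl]].
  apply mem_In, filter_In in Hzl as [_ Hzl].
  apply mem_In in Hz; rewrite Hz in Hzl; discriminate.
Qed.

Lemma pn_eqb_eq p q : pn_eqb p q = true <-> p = q.
Proof.
  destruct p as [[k P] n], q as [[k' P'] n']; simpl.
  rewrite !andb_true_iff, !Nat.eqb_eq.
  destruct k, k'; simpl; split; intuition congruence.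
Qed.

Lemma pn_eqb_refl p : pn_eqb p p = true.
Proof. now apply pn_eqb_eq. Qed.

Lemma existsb_pn_eqb_filter q l :
  existsb (pn_eqb q) (filter (fun p => negb (pn_eqb p q)) l) = false.
Proof.
  apply not_true_is_false; intros Hq.
  apply existsb_exists in Hq as [p [Hp Hqp]].
  apply filter_In in Hp as [_ Hp]; apply pn_eqb_eq in Hqp; subst.
  now rewrite pn_eqb_refl in Hp.
Qed.

Section IdentitySubstitution.
Variable s : nat -> fterm.
Hypothesis s_id : forall z, s z = FV z.

Lemma tsubst_id : forall t, tsubst s t = t.
Proof.
  fix IH 1; intros [z | f ts]; simpl; [now apply s_id |].
  f_equal; induction ts as [| t ts IHts]; simpl; [reflexivity |].
  now rewrite IH, IHts.
Qed.

Lemma map_tsubst_id l : map (tsubst s) l = l.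
Proof. induction l; simpl; [reflexivity | now rewrite tsubst_id, IHl]. Qed.

Lemma flat_map_fv_id l : flat_map (fun z => fv_t (s z)) l = l.
Proof. induction l; simpl; [reflexivity | now rewrite s_id, IHl]. Qed.

Lemma upd_id y : forall z, upd s y (FV y) z = FV z.
Proof. intros z; unfold upd; now destruct (Nat.eqb_spec z y); subst. Qed.

Lemma upds_id xs : forall z, upds s xs (map FV xs) z = FV z.
Proof.
  induction xs as [| y xs IH]; simpl; [exact s_id |].
  intros z; unfold upd; destruct (Nat.eqb_spec z y); subst; auto.
Qed.

End IdentitySubstitution.

Lemma fsub_id A : forall s, (forall z, s z = FV z) -> fsub s A = A.
Proof.
  induction A; intros s Hs; simpl; try reflexivity.
  - now rewrite map_tsubst_id.
  - now rewrite IHA1, IHA2.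
  - rewrite flat_map_fv_id, mem_filter_neq by exact Hs.
    now rewrite IHA by (apply upd_id; exact Hs).
  - now rewrite IHA.
  - rewrite flat_map_fv_id, existsb_mem_filter_notin by exact Hs.
    now rewrite IHA, map_tsubst_id by (try apply upds_id; exact Hs).
Qed.

(* A predicate substitution that replaces each name by itself, or not at all;
   this is the shape the binder cases of [psub] keep when no renaming occurs. *)
Definition psubst_trivial (s2 : pname -> option abs) : Prop :=
  forall p, s2 p = None \/ s2 p = Some (ren_abs (fst (fst p)) (snd (fst p)) (snd p)).

Lemma psubst_trivial_shadow k P m s2 :
  psubst_trivial s2 ->
  psubst_trivial (fun p => if pn_eqb p (k, P, m)
                           then (if P =? P then None else Some (ren_abs k P m))
                           else s2 p).
Proof. intros Hs2 p; destruct (pn_eqb p _); [rewrite Nat.eqb_refl; auto | auto]. Qed.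

Lemma upds_map_self xs us s :
  NoDup xs -> length xs = length us -> map (upds s xs us) xs = us.
Proof.
  revert us; induction xs as [| x xs IH]; intros [| u us] Hnd Hl;
    simpl in *; try lia; [reflexivity |].
  inversion Hnd as [| ? ? Hx Hnd']; subst.
  unfold upd at 1; rewrite Nat.eqb_refl; f_equal.
  rewrite <- (IH us) at 2 by (auto; lia).
  apply map_ext_in; intros y Hy; unfold upd.
  destruct (Nat.eqb_spec y x); subst; tauto.
Qed.

Lemma fv1_abs_ren k P m : fv1_abs (ren_abs k P m) = [].
Proof.
  unfold fv1_abs, ren_abs; simpl.
  assert (Hfv : forall l, flat_map fv_t (map FV l) = l)
    by (induction l; simpl; congruence).
  rewrite Hfv; generalize (seq 0 m); intros l.
  destruct (filter _ l) as [| z r] eqn:Hf; [reflexivity |].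
  assert (Hz : In z (filter (fun z => negb (mem z l)) l)) by (rewrite Hf; left; auto).
  apply filter_In in Hz as [Hz Hnz]; apply mem_In in Hz; now rewrite Hz in Hnz.
Qed.

Section TrivialPredicateSubstitution.
Variable s2 : pname -> option abs.
Hypothesis s2_trivial : psubst_trivial s2.

Lemma flat_map_fv1_abs_trivial l :
  flat_map (fun p => match s2 p with Some G => fv1_abs G | None => [] end) l = [].
Proof.
  induction l as [| p l IH]; simpl; [reflexivity |].
  rewrite IH; destruct (s2_trivial p) as [-> | ->]; [reflexivity |].
  now rewrite fv1_abs_ren.
Qed.

Lemma flat_map_fvp_trivial l :
  flat_map (fun p => match s2 p with Some G => fvp (snd G) | None => [p] end) l = l.
Proof.
  induction l as [| p l IH]; simpl; [reflexivity |].
  rewrite IH; destruct (s2_trivial p) as [-> | ->]; [reflexivity |].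
  simpl; rewrite length_map, length_seq; now destruct p as [[k P] m].
Qed.

End TrivialPredicateSubstitution.

Lemma psub_id A :
  forall s1 s2, (forall z, s1 z = FV z) -> psubst_trivial s2 -> psub s1 s2 A = A.
Proof.
  induction A; intros s1 s2 Hs1 Hs2; simpl; try reflexivity.
  - rewrite map_tsubst_id by exact Hs1.
    destruct (Hs2 (k, P, length ts)) as [-> | ->]; [reflexivity |].
    unfold apply_abs, ren_abs; simpl; rewrite map_map; simpl; f_equal.
    now apply upds_map_self; [apply seq_NoDup | rewrite length_seq].
  - now rewrite IHA1, IHA2.
  - rewrite flat_map_fv_id, flat_map_fv1_abs_trivial, app_nil_r, mem_filter_neq by auto.
    now rewrite IHA by (try apply upd_id; auto).
  - rewrite flat_map_fvp_trivial, existsb_pn_eqb_filter by exact Hs2.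
    now rewrite IHA by (try apply psubst_trivial_shadow; auto).
  - rewrite flat_map_fv_id, flat_map_fv1_abs_trivial, app_nil_r by auto.
    rewrite existsb_mem_filter_notin, flat_map_fvp_trivial, existsb_pn_eqb_filter by exact Hs2.
    now rewrite IHA, map_tsubst_id by (try apply upds_id; try apply psubst_trivial_shadow; auto).
Qed.

Lemma subty_wf E A B : subty E A B -> wf A /\ wf B.
Proof. induction 1; simpl in *; try tauto; destruct q; simpl; tauto. Qed.

Lemma typ_wf E G t A : typ E G t A -> wf A.
Proof.
  induction 1; simpl in *; try tauto; try (destruct q; simpl; tauto).
  now apply subty_wf in H.
Qed.

Lemma freeq_quant1_self q A : ~ freeq q (quant1 q A).
Proof.
  destruct q; simpl; intros Hq; apply filter_In in Hq as [_ Hq].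
  - now rewrite Nat.eqb_refl in Hq.
  - now rewrite pn_eqb_refl in Hq.
Qed.

(* Instantiate the left quantifier by the bound variable itself, then
   generalize it back on the right. *)
Lemma subty_quant1 E q A B : subty E A B -> subty E (quant1 q A) (quant1 q B).
Proof.
  intros Hsub; pose proof (subty_wf _ _ _ Hsub) as [HA HB].
  apply st_all_r; [apply freeq_quant1_self |].
  destruct q as [y | X n]; simpl.
  - apply st_all1_l with (t := FV y); [exact HA |].
    unfold subst1; now rewrite fsub_id by (apply upd_id; reflexivity).
  - apply st_all2_l with (G := ren_abs KVar X n); [exact HA | |].
    + unfold wf_abs, ren_abs; simpl.
      split; [apply length_seq | split; [apply seq_NoDup | exact I]].
    + unfold subst2; rewrite psub_id; [exact Hsub | reflexivity |].
      intros p; destruct (pn_eqb p (KVar, X, n)) eqn:Hp; [| auto].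
      apply pn_eqb_eq in Hp; subst; simpl; auto.
Qed.

Lemma apps_snoc t us u : apps t (us ++ [u]) = App (apps t us) u.
Proof. unfold apps; now rewrite fold_left_app. Qed.

Lemma apps_var_cases x us :
  (us = [] /\ apps (Var x) us = Var x) \/
  (exists us' u, us = us' ++ [u] /\ apps (Var x) us = App (apps (Var x) us') u).
Proof.
  destruct us as [| u us' _] using rev_ind; [now left |].
  right; exists us', u; split; [reflexivity | apply apps_snoc].
Qed.

Lemma apps_var_neq_Lam x us y t : apps (Var x) us <> Lam y t.
Proof.
  destruct (apps_var_cases x us) as [[_ ->] | [us' [u [_ ->]]]]; discriminate.
Qed.

Lemma apps_var_neq_Y x us t : apps (Var x) us <> App Ycomb t.
Proof.
  destruct (apps_var_cases x us) as [[_ ->] | [us' [u [_ ->]]]]; [discriminate |].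
  intros [= Hus' _].
  destruct (apps_var_cases x us') as [[_ Heq] | [us2 [u2 [_ Heq]]]];
    rewrite Heq in Hus'; [discriminate |].
  injection Hus' as Hus2 _; exact (apps_var_neq_Lam _ _ _ _ Hus2).
Qed.

Lemma nth_snoc_last {X} (l : list X) a d n : length l = n -> nth n (l ++ [a]) d = a.
Proof. intros <-; apply nth_middle. Qed.

Section Spine.
Variable E : list (fterm * fterm).
Variable G : context.
Variable x : nat.
Variable A : formula.

(* [spine us T]: the chain of the statement, built from the right. *)
Inductive spine : list term -> formula -> Prop :=
| spine_nil v T :
    not_free_seq v A G -> subty E (quant v A) T -> spine [] T
| spine_snoc us u C B v T :
    spine us (Arr C B) -> typ E ((x, A) :: G) u C ->
    not_free_seq v A G -> subty E (quant v B) T -> spine (us ++ [u]) T.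

Lemma spine_subty us T T' : spine us T -> subty E T T' -> spine us T'.
Proof.
  intros [v T0 Hv HT | us' u C B v T0 Hs Hu Hv HT] HTT'.
  - exact (spine_nil v _ Hv (st_trans _ _ _ _ HT HTT')).
  - exact (spine_snoc _ _ _ _ v _ Hs Hu Hv (st_trans _ _ _ _ HT HTT')).
Qed.

Lemma not_free_ctx_cons q :
  ~ free_ctx q ((x, A) :: G) -> ~ freeq q A /\ ~ free_ctx q G.
Proof.
  intros Hq; split; [intros HA | intros [p [Hp HpA]]]; apply Hq.
  - now exists (x, A); split; [left |].
  - now exists p; split; [right |].
Qed.

Lemma spine_quant1 us T q :
  spine us T -> ~ free_ctx q ((x, A) :: G) -> spine us (quant1 q T).
Proof.
  intros Hs Hq; apply not_free_ctx_cons in Hq.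
  assert (Hqv : forall v, not_free_seq v A G -> not_free_seq (q :: v) A G)
    by (intros v Hv q' [<- | Hq']; auto).
  destruct Hs as [v T Hv HT | us u C B v T Hs Hu Hv HT].
  - exact (spine_nil (q :: v) _ (Hqv v Hv) (subty_quant1 _ q _ _ HT)).
  - exact (spine_snoc _ _ _ _ (q :: v) _ Hs Hu (Hqv v Hv) (subty_quant1 _ q _ _ HT)).
Qed.

Lemma typ_spine Γ t T :
  typ E Γ t T -> forall us, Γ = (x, A) :: G -> t = apps (Var x) us -> spine us T.
Proof.
  induction 1 as [ | | Γ t u C B Ht IHt Hu _ | | Γ t y T u Hwf Ht IH
                 | Γ t X n T F HF Hwf Ht IH | Γ t T y v w Hvw Hwf Ht IH | | ];
    intros us -> Hus.
  - destruct (apps_var_cases x us) as [[-> Heq] | [us' [u [_ Heq]]]];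
      rewrite Heq in Hus; [| discriminate].
    injection Hus as ->; simpl in H; rewrite Nat.eqb_refl in H; injection H as <-.
    apply spine_nil with (v := []); [intros _ [] | now apply st_refl].
  - exfalso; exact (apps_var_neq_Lam _ _ _ _ (eq_sym Hus)).
  - destruct (apps_var_cases x us) as [[-> Heq] | [us' [u' [-> Heq]]]];
      rewrite Heq in Hus; [discriminate |].
    injection Hus as -> ->.
    apply spine_snoc with (C := C) (B := B) (v := []);
      [exact (IHt us' eq_refl eq_refl) | exact Hu | intros _ [] |].
    apply st_refl; apply typ_wf in Ht; simpl in Ht; tauto.
  - now apply spine_quant1; auto.
  - apply (spine_subty _ _ _ (IH us eq_refl Hus)).
    apply st_all1_l with (t := u); [exact (typ_wf _ _ _ _ Ht) | now apply st_refl].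
  - apply (spine_subty _ _ _ (IH us eq_refl Hus)).
    apply st_all2_l with (G := F); [exact (typ_wf _ _ _ _ Ht) | exact HF | now apply st_refl].
  - apply (spine_subty _ _ _ (IH us eq_refl Hus)).
    apply st_eq with (v := v); [exact Hvw | exact Hwf |].
    exact (st_refl _ _ (typ_wf _ _ _ _ Ht)).
  - eapply spine_subty; eauto.
  - exfalso; exact (apps_var_neq_Y _ _ _ (eq_sym Hus)).
Qed.

(* The chain in indexed form; [nth i (A :: Bs)] is the type "B_i" of the
   statement, with B_0 = A. *)
Lemma spine_nth us T :
  spine us T ->
  let n := length us in
  exists Cs Bs vs, length Cs = n /\ length Bs = n /\ length vs = S n /\
    (forall i, i <= n -> not_free_seq (nth i vs []) A G) /\
    (forall i, i < n -> subty E (quant (nth i vs []) (nth i (A :: Bs) Bot))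
                                (Arr (nth i Cs Bot) (nth i Bs Bot))) /\
    subty E (quant (nth n vs []) (nth n (A :: Bs) Bot)) T /\
    (forall i, i < n -> typ E ((x, A) :: G) (nth i us (Var 0)) (nth i Cs Bot)).
Proof.
  induction 1 as [v T Hv HT | us u C B v T _ IH Hu Hv HT]; cbv zeta.
  - exists [], [], [v]; simpl.
    do 3 (split; [reflexivity |]).
    split; [intros [| i] Hi; [exact Hv | lia] |].
    split; [intros i Hi; lia |].
    split; [exact HT | intros i Hi; lia].
  - destruct IH as (Cs & Bs & vs & HCs & HBs & Hvs & Hnf & Hsub & Hlast & Hty).
    exists (Cs ++ [C]), (Bs ++ [B]), (vs ++ [v]).
    rewrite !length_app; simpl length.
    split; [lia | split; [lia | split; [lia |]]].
    split; [| split; [| split]].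
    + intros i Hi; destruct (Nat.eq_dec i (S (length us))) as [-> | Hne].
      * now rewrite nth_snoc_last.
      * rewrite app_nth1 by lia; apply Hnf; lia.
    + intros i Hi; rewrite app_comm_cons.
      destruct (Nat.eq_dec i (length us)) as [-> | Hne].
      * rewrite (app_nth1 vs), (app_nth1 (A :: Bs)) by (simpl; lia).
        now rewrite !nth_snoc_last.
      * rewrite !app_nth1 by (simpl; lia); apply Hsub; lia.
    + rewrite app_comm_cons, !nth_snoc_last by (simpl; lia); exact HT.
    + intros i Hi; destruct (Nat.eq_dec i (length us)) as [-> | Hne].
      * now rewrite !nth_snoc_last.
      * rewrite !app_nth1 by lia; apply Hty; lia.
Qed.

End Spine.

Theorem corollary4p1 (E : list (fterm * fterm)) (G : context) (x : nat)
    (A B : formula) (us : list term) :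
  typ E ((x, A) :: G) (apps (Var x) us) B ->
  let n := length us in
  (n = 0 /\
     exists v0 : list qvar, not_free_seq v0 A G /\ subty E (quant v0 A) B)
  \/
  (1 <= n /\
     exists (Cs Bs : list formula) (vs : list (list qvar)),
       length Cs = n /\ length Bs = n /\ length vs = S n /\
       (forall i, i <= n -> not_free_seq (nth i vs []) A G) /\
       subty E (quant (nth 0 vs []) A) (Arr (nth 0 Cs Bot) (nth 0 Bs Bot)) /\
       (forall i, 1 <= i <= n - 1 ->
          subty E (quant (nth i vs []) (nth (i - 1) Bs Bot))
                  (Arr (nth i Cs Bot) (nth i Bs Bot))) /\
       subty E (quant (nth n vs []) (nth (n - 1) Bs Bot)) B /\
       (forall i, i < n -> typ E ((x, A) :: G) (nth i us (Var 0)) (nth i Cs Bot))).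
Proof.
  intros Ht n.
  pose proof (spine_nth _ _ _ _ _ _ (typ_spine E G x A _ _ _ Ht us eq_refl eq_refl))
    as (Cs & Bs & vs & HCs & HBs & Hvs & Hnf & Hsub & Hlast & Hty).
  unfold n; clear n; destruct (length us) as [| m] eqn:Hn.
  - left; split; [reflexivity |]; now exists (nth 0 vs []); split; auto.
  - right; split; [lia |]; exists Cs, Bs, vs.
    do 4 (split; [assumption |]).
    split; [exact (Hsub 0 ltac:(lia)) |].
    split; [| split; [| exact Hty]].
    + intros [| j] Hj; [lia |].
      replace (S j - 1) with j by lia; exact (Hsub (S j) ltac:(lia)).
    + now replace (S m - 1) with m by lia.
Qed.
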